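(* Let $G$ be a distance-regular graph of diameter $d$ which is an antipodal double cover, and let $B$ be its tridiagonal intersection matrix. If $G$ admits a distance magic labeling, then $\ker B$ has a basis consisting of a single vector $\boldsymbol{u}=(u_0,\dots,u_d)^T$ with $u_0=1$ and $u_d=-1$. If $G$ admits a closed distance magic labeling, then $\ker(I+B)$ has a basis consisting of a single vector $\boldsymbol{u}=(u_0,\dots,u_d)^T$ with $u_0=1$ and $u_d=-1$.
   Context: A connected graph $G$ of diameter $d$ is distance-regular if there are non-negative integers $b_i,c_i$ ($0\le i\le d$) such that for any two vertices $x,y$ at distance $i$, $y$ has exactly $c_i$ neighbours at distance $i-1$ from $x$ and exactly $b_i$ neighbours at distance $i+1$ from $x$. $G$ is $r$-regular with $r=b_0$, $c_0=b_d=0$, $c_1=1$, $a_i=r-b_i-c_i$. $B$ is the $(d+1)\times(d+1)$ tridiagonal matrix indexed by $0,\dots,d$ with $B_{i,i}=a_i$, $B_{i,i+1}=c_{i+1}$, $B_{i+1,i}=b_i$, other entries $0$. $G$ is an antipodal double cover if every vertex has exactly one vertex at distance $d$ from it. A distance magic (resp. closed distance magic) labeling of $G$ of order $N$ is a bijection $l:V(G)\to\{1,\dots,N\}$ such that $\sum_{y\in N(x)}l(y)$ (resp. $\sum_{y\in N(x)\cup\{x\}}l(y)$) is the same for every vertex $x$. *)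

From mathcomp Require Import all_boot all_order all_algebra.
Set Implicit Arguments. Unset Strict Implicit. Unset Printing Implicit Defensive.
Import Order.TTheory GRing.Theory Num.Theory.

Definition simple_graph (T : finType) (e : rel T) : Prop :=
  symmetric e /\ irreflexive e.

Definition connected_graph (T : finType) (e : rel T) : Prop :=
  forall x y : T, connect e x y.

Definition ball (T : finType) (e : rel T) (x : T) (n : nat) : {set T} :=
  iter n (fun A : {set T} => A :|: [set y | [exists z in A, e z y]]) [set x].

(* graph distance: least n with y in ball e x n (equals #|T| if unreachable) *)
Definition gdist (T : finType) (e : rel T) (x y : T) : nat :=
  find (fun n => y \in ball e x n) (iota 0 #|T|).

Definition diameter (T : finType) (e : rel T) : nat :=
  \max_(x : T) \max_(y : T) gdist e x y.

Definition distance_regular (T : finType) (e : rel T) (d : nat)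
    (b c : nat -> nat) : Prop :=
  simple_graph e /\ connected_graph e /\ diameter e = d /\
  forall (i : nat) (x y : T), i <= d -> gdist e x y = i ->
    #|[set z | e y z & gdist e x z == i.-1]| = c i /\
    #|[set z | e y z & gdist e x z == i.+1]| = b i.

Definition antipodal_double_cover (T : finType) (e : rel T) (d : nat) : Prop :=
  forall x : T, #|[set y | gdist e x y == d]| = 1.

(* intersection matrix B, indexed by 0..d; a_i = r - b_i - c_i, r = b_0 *)
Definition inter_mx (R : nzRingType) (d : nat) (b c : nat -> nat) : 'M[R]_d.+1 :=
  (\matrix_(i < d.+1, j < d.+1)
    if (j : nat) == i then ((b 0)%:R - (b i)%:R - (c i)%:R : R)
    else if (j : nat) == i.+1 then (c j)%:R
    else if (i : nat) == j.+1 then (b j)%:R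
    else 0)%R.

Definition labeling (T : finType) (l : T -> nat) : Prop :=
  injective l /\ forall x, 1 <= l x <= #|T|.

Definition distance_magic (T : finType) (e : rel T) : Prop :=
  exists l : T -> nat, labeling l /\
    exists k : nat, forall x : T, \sum_(y | e x y) l y = k.

Definition closed_distance_magic (T : finType) (e : rel T) : Prop :=
  exists l : T -> nat, labeling l /\
    exists k : nat, forall x : T, \sum_(y | e x y || (y == x)) l y = k.

From mathcomp Require Import all_boot all_order all_algebra.
From mathcomp Require Import zify ring.
Import GRing.Theory Num.Theory.
Set Implicit Arguments. Unset Strict Implicit. Unset Printing Implicit Defensive.

(* If f is an eigenfunction of the adjacency operator with eigenvalue -s, then
   for every vertex x the vector of sums of f over the spheres around x lies in
   ker (s I + B), because B i j counts the neighbours at distance i from x of a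
   vertex at distance j from x.  As B is tridiagonal with nonzero entries c_j
   above the diagonal, a vector of this kernel is determined by its entry u_0.  A
   (closed) distance magic labeling l with magic constant k gives the injective
   eigenfunction f = (b_0 + s) l - k for s = 0 (resp. s = 1).  If a is the
   antipode of x, the sphere vectors of x and a are f(x) u and f(a) u; their
   last coordinates give f(x) = f(a) u_d and f(a) = f(x) u_d, hence u_d^2 = 1,
   and u_d = 1 would contradict injectivity. *)

Section GraphDistance.

Variables (T : finType) (e : rel T).

Lemma in_ball0 x y : (y \in ball e x 0) = (y == x).
Proof. by rewrite in_set1. Qed.

Lemma in_ballS x n y :
  (y \in ball e x n.+1) = (y \in ball e x n) || [exists z in ball e x n, e z y].
Proof. by rewrite in_setU in_set. Qed.

Lemma ball_mono x m n : m <= n -> ball e x m \subset ball e x n.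
Proof.
move=> /subnK <-; elim: (n - m) => [|k IHk]; first exact: subxx.
by apply: subset_trans IHk _; apply/subsetP => y; rewrite addSn in_ballS => ->.
Qed.

Lemma ball_shift y w m : e y w -> ball e w m \subset ball e y m.+1.
Proof.
move=> eyw; elim: m => [|m IHm]; apply/subsetP => z.
  rewrite in_ball0 => /eqP ->; rewrite in_ballS; apply/orP; right.
  by apply/existsP; exists y; rewrite in_ball0 eqxx.
rewrite in_ballS => /orP[/(subsetP IHm) zb|/existsP[v /andP[vb evz]]].
  by rewrite in_ballS zb.
rewrite in_ballS; apply/orP; right.
by apply/existsP; exists v; rewrite evz (subsetP IHm).
Qed.

Lemma path_ball x p : path e x p -> last x p \in ball e x (size p).
Proof.
elim: p x => [|z p IHp] x /=; first by rewrite in_ball0.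
by case/andP => exz /IHp; apply: (subsetP (ball_shift _ exz)).
Qed.

Lemma connect_ball x y : connect e x y -> exists2 n, n < #|T| & y \in ball e x n.
Proof.
case/connectP => p /shortenP[p' p'e p'uniq _] ->.
exists (size p'); last exact: path_ball.
by rewrite -ltnS -[(size p').+1]/(size (x :: p')) -(card_uniqP p'uniq) ltnS max_card.
Qed.

Lemma gdist_le_ball x y n : n < #|T| -> y \in ball e x n -> gdist e x y <= n.
Proof.
move=> nT yb; rewrite leqNgt; apply/negP => /(before_find 0).
by rewrite nth_iota // add0n yb.
Qed.

Lemma card_gt0_diameter : 0 < diameter e -> 0 < #|T|.
Proof.
have [x _ _|T0] := pickP (@predT T); first by apply/card_gt0P; exists x.
by rewrite /diameter big_pred0.
Qed.

Lemma gdist_le_diameter x y : gdist e x y <= diameter e.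
Proof.
exact: leq_trans (leq_bigmax y) (leq_bigmax (F := fun x => \max_y gdist e x y) x).
Qed.

Hypothesis conn : connected_graph e.

Lemma gdist_ball x y : gdist e x y < #|T| /\ y \in ball e x (gdist e x y).
Proof.
have [n nT yb] := connect_ball (conn x y).
have lt_gT : gdist e x y < #|T| by apply: leq_ltn_trans (gdist_le_ball nT yb) nT.
split=> //; have has_ball : has (fun n => y \in ball e x n) (iota 0 #|T|).
  by rewrite has_find size_iota.
by have := nth_find 0 has_ball; rewrite nth_iota // add0n.
Qed.

Lemma gdist_le x y n : y \in ball e x n -> gdist e x y <= n.
Proof.
move=> yb; have [nT|Tn] := ltnP n #|T|; first exact: gdist_le_ball.
exact: leq_trans (ltnW (gdist_ball x y).1) Tn.
Qed.

Lemma gdist_eq0 x y : (gdist e x y == 0) = (y == x).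
Proof.
apply/idP/idP => [/eqP gxy0|/eqP ->].
  by have [_] := gdist_ball x y; rewrite gxy0 in_ball0.
by rewrite -leqn0 gdist_le // in_ball0.
Qed.

Lemma gdist_xx x : gdist e x x = 0.
Proof. by apply/eqP; rewrite gdist_eq0. Qed.

Lemma gdist_neighbour x y z : e y z -> gdist e x z <= (gdist e x y).+1.
Proof.
move=> eyz; apply: gdist_le; rewrite in_ballS; apply/orP; right.
by apply/existsP; exists y; rewrite eyz (gdist_ball x y).2.
Qed.

Hypothesis sym : symmetric e.

Lemma gdist_sym x y : gdist e x y = gdist e y x.
Proof.
suff gdist_sym_le u v : gdist e v u <= gdist e u v.
  by apply/eqP; rewrite eqn_leq !gdist_sym_le.
suff ball_gdist n w : w \in ball e u n -> gdist e w u <= n.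
  exact: ball_gdist (gdist_ball u v).2.
elim: n w => [|n IHn] w; first by rewrite in_ball0 => /eqP ->; rewrite gdist_xx.
rewrite in_ballS => /orP[/IHn/leqW //|/existsP[z /andP[zb ezw]]].
have zu : u \in ball e z n := subsetP (ball_mono _ (IHn _ zb)) _ (gdist_ball z u).2.
by apply/gdist_le/(subsetP (ball_shift _ _) _ zu); rewrite sym.
Qed.

Lemma closer_neighbour x y n :
  gdist e x y = n.+1 -> exists2 w, e y w & gdist e x w = n.
Proof.
move=> gxy; have [_] := gdist_ball x y; rewrite gxy in_ballS.
case/orP => [/gdist_le|/existsP[z /andP[zb ezy]]]; first by rewrite gxy ltnn.
exists z; first by rewrite sym.
by have := gdist_le zb; have := gdist_neighbour x ezy; lia.
Qed.

Lemma gdist_attained x y k : k <= gdist e x y -> exists z, gdist e x z = k.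
Proof.
move=> /subnK; move: (gdist e x y - k) => n; elim: n y => [|n IHn] y gxy.
  by exists y; rewrite -gxy.
have [|w _ gxw] := closer_neighbour (_ : gdist e x y = (n + k).+1); first by rewrite -gxy.
exact: IHn w (esym gxw).
Qed.

End GraphDistance.

Section HessenbergKernel.

Local Open Scope ring_scope.

Variables (R : idomainType) (n : nat) (M : 'M[R]_n.+1).
Hypothesis M_hessenberg : forall i j : 'I_n.+1, (i.+1 < j)%N -> M i j = 0.
Hypothesis M_superdiag : forall i j : 'I_n.+1, j = i.+1 :> nat -> M i j != 0.

Lemma hessenberg_ker_eq0 (w : 'cV[R]_n.+1) : M *m w = 0 -> w ord0 ord0 = 0 -> w = 0.
Proof.
move=> Mw0 w00; suff w_le k (j : 'I_n.+1) : (j <= k)%N -> w j ord0 = 0.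
  by apply/matrixP => j k; rewrite (ord1 k) mxE (w_le n) // -ltnS.
elim: k j => [|k IHk] j jk.
  by rewrite (_ : j = ord0) //; apply: val_inj => /=; lia.
have [kj|jk'] := ltnP k j; last exact: IHk.
have {jk kj}jE : j = k.+1 :> nat by lia.
have kn : (k < n.+1)%N by have := ltn_ord j; lia.
have := congr1 (fun v : 'cV_n.+1 => v (Ordinal kn) ord0) Mw0.
rewrite !mxE (bigD1 j) //= big1 ?addr0 => [/eqP|l ljn].
  by rewrite mulf_eq0 (negbTE (@M_superdiag (Ordinal kn) j jE)) => /eqP.
have [lk|kl] := leqP l k; first by rewrite IHk // mulr0.
rewrite M_hessenberg ?mul0r //=; move: ljn; rewrite -val_eqE /= jE; lia.
Qed.

Lemma hessenberg_ker_line (u : 'cV[R]_n.+1) : M *m u = 0 -> u ord0 ord0 = 1 ->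
  forall v, M *m v = 0 <-> exists t, v = t *: u.
Proof.
move=> Mu0 u00 v; split=> [Mv0|[t ->]]; last by rewrite -scalemxAr Mu0 scaler0.
exists (v ord0 ord0); apply/eqP; rewrite -subr_eq0; apply/eqP/hessenberg_ker_eq0.
  by rewrite mulmxBr -scalemxAr Mv0 Mu0 scaler0 subrr.
by rewrite !mxE u00 mulr1 subrr.
Qed.

End HessenbergKernel.

Lemma shifted_inter_mx_hessenberg (R : nzRingType) (d : nat) (b c : nat -> nat)
    (s : R) (i j : 'I_d.+1) :
  i.+1 < j -> (s%:M + inter_mx R d b c)%R i j = 0%R.
Proof.
move=> ij; rewrite !mxE.
have neq_ij : (i == j) = false by apply/eqP => /(congr1 val) /=; lia.
have [-> -> ->] : [/\ (j == i :> nat) = false, (j == i.+1 :> nat) = false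
                    & (i == j.+1 :> nat) = false] by split; apply/eqP; lia.
by rewrite neq_ij mulr0n add0r.
Qed.

Definition dist_profile (R : nmodType) (T : finType) (e : rel T) (d : nat)
    (x : T) (f : T -> R) : 'cV[R]_d.+1 :=
  \col_(j < d.+1) (\sum_(y | gdist e x y == j) f y)%R.

Lemma dist_profile_ord0 (R : nmodType) (T : finType) (e : rel T) (d : nat)
    x (f : T -> R) :
  connected_graph e -> dist_profile e d x f ord0 ord0 = f x.
Proof. by move=> conn; rewrite mxE (big_pred1 x) // => y; rewrite gdist_eq0. Qed.

Definition distance_magic_with_loops (T : finType) (e : rel T) (s : nat) : Prop :=
  exists l : T -> nat, labeling l /\
    exists k : nat, forall x : T, \sum_(y | e x y) l y + s * l x = k.

Lemma distance_magic_with_loops0 (T : finType) (e : rel T) :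
  distance_magic e -> distance_magic_with_loops e 0.
Proof.
by case=> l [lab [k magic]]; exists l; split=> //; exists k => x; rewrite addn0.
Qed.

Lemma closed_distance_magic_with_loops1 (T : finType) (e : rel T) :
  irreflexive e -> closed_distance_magic e -> distance_magic_with_loops e 1.
Proof.
move=> irr [l [lab [k magic]]]; exists l; split=> //; exists k => x.
rewrite -(magic x) [RHS](bigD1 x) ?eqxx ?orbT // mul1n addnC; congr (_ + _).
by apply: eq_bigl => y; case: eqP => [->|_]; rewrite ?irr ?orbF ?andbT ?andbF.
Qed.

Section DistanceRegular.

Variables (T : finType) (e : rel T) (d : nat) (b c : nat -> nat).
Hypothesis drg : distance_regular e d b c.

Let sym : symmetric e := drg.1.1.
Let irr : irreflexive e := drg.1.2.
Let conn : connected_graph e := drg.2.1.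
Let diam : diameter e = d := drg.2.2.1.
Let inter_numbers := drg.2.2.2.

Lemma card_neighbours y : #|[set z | e y z]| = b 0.
Proof.
have [_ <-] := inter_numbers (leq0n d) (gdist_xx conn y).
apply: eq_card => z; rewrite !in_set; case eyz: (e y z) => //=.
have := gdist_neighbour conn y eyz; rewrite gdist_xx //.
have : gdist e y z != 0 by rewrite gdist_eq0 //; apply: contraTneq eyz => ->; rewrite irr.
lia.
Qed.

(* When z = x the first two summands coincide (0.-1 = 0), but both vanish as e
   is irreflexive. *)
Lemma neighbour_dist_cases x y z : e z y ->
  ((gdist e x y == (gdist e x z).-1) + (gdist e x y == gdist e x z)
   + (gdist e x y == (gdist e x z).+1))%N = 1.
Proof.
move=> ezy; have := gdist_neighbour conn x ezy.
have /(gdist_neighbour conn x) : e y z by rewrite sym.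
have : gdist e x z = 0 -> gdist e x y != 0.
  move/eqP; rewrite !gdist_eq0 // => /eqP <-; apply: contraTneq ezy => ->.
  by rewrite irr.
lia.
Qed.

Lemma card_neighbours_at_dist (R : nzRingType) x z (i j : 'I_d.+1) :
  gdist e x z = j ->
  (#|[set y | e z y & gdist e x y == i]|%:R = inter_mx R d b c i j)%R.
Proof.
move=> gxz; have jd : j <= d by rewrite -ltnS.
have [card_c card_b] := inter_numbers jd gxz.
rewrite mxE; case: eqP => [ji|nji].
  suff <- : (#|[set y | e z y & gdist e x y == i]| + b j + c j)%N = b 0.
    by rewrite !natrD ji addrAC !addrK.
  rewrite -card_b -card_c -(card_neighbours z) -!sum1dep_card !big_mkcondr.
  rewrite -!big_split /=; apply: eq_bigr => y ezy.
  have := neighbour_dist_cases x ezy; rewrite gxz ji.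
  by case: (gdist e x y == _); case: (gdist e x y == _); case: (gdist e x y == _).
case: eqP => [ji1|nji1].
  by rewrite -card_c; congr (_%:R)%R; apply: eq_card => y; rewrite !inE ji1.
case: eqP => [ij1|nij1].
  by rewrite -card_b; congr (_%:R)%R; apply: eq_card => y; rewrite !inE ij1.
rewrite (_ : #|_| = 0%N) //; apply: eq_card0 => y; rewrite !inE.
apply/negP => /andP[/(neighbour_dist_cases x) + /eqP gxy]; rewrite gxy gxz.
by move: nji nji1 nij1; lia.
Qed.

Lemma mul_inter_mx_profile (R : nzRingType) x (f : T -> R) :
  (inter_mx R d b c *m dist_profile e d x f =
   dist_profile e d x (fun w => \sum_(y | e w y) f y))%R.
Proof.
apply/matrixP => i k; rewrite (ord1 k) !mxE.
pose od y : 'I_d.+1 := inord (gdist e x y).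
have odE y : od y = gdist e x y :> nat.
  by rewrite inordK // ltnS -diam gdist_le_diameter.
transitivity (\sum_y inter_mx R d b c i (od y) * f y)%R.
  rewrite [RHS](partition_big od xpredT) //=; apply: eq_bigr => j _.
  rewrite [dist_profile _ _ _ _ _ _]mxE mulr_sumr.
  apply: eq_big => [y|y /eqP gxy]; first by rewrite -val_eqE /= odE.
  by congr (inter_mx _ _ _ _ _ _ * _)%R; apply: val_inj; rewrite /= odE gxy.
under eq_bigr => y _ do
  rewrite -(card_neighbours_at_dist R i (esym (odE y))) mulr_natl -sumr_const.
rewrite (exchange_big_dep (fun w => gdist e x w == i)) /=.
  by apply: eq_bigr => w gxw; apply: eq_bigl => y; rewrite inE gxw andbT sym.
by move=> y w _; rewrite inE => /andP[].
Qed.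

Lemma magic_eigenfunction (R : numDomainType) (s : nat) :
  0 < b 0 + s -> distance_magic_with_loops e s ->
  exists f : T -> R, injective f /\
    forall w, (s%:R * f w + \sum_(y | e w y) f y = 0)%R.
Proof.
move=> bs_gt0 [l [[l_inj _] [k magic]]].
exists (fun y => (b 0 + s)%:R * (l y)%:R - k%:R)%R; split.
  move=> y z /addIr /mulfI fyz; apply/l_inj/eqP; rewrite -(eqr_nat R) fyz //.
  by rewrite pnatr_eq0 -lt0n.
move=> w; have := congr1 (fun n => n%:R : R)%R (magic w).
rewrite /= natrD natrM natr_sum => /(canRL (addrK _)) sum_l.
have sum_k : (\sum_(y | e w y) (k%:R : R) = (b 0)%:R * k%:R)%R.
  rewrite mulr_natl -(card_neighbours w) -sumr_const.
  by apply: eq_bigl => y; rewrite inE.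
by rewrite sumrB -mulr_sumr sum_l sum_k natrD; ring.
Qed.

Section Antipodal.

Hypothesis antipodal : antipodal_double_cover e d.

Lemma antipodeP x : exists a, forall y, (gdist e x y == d) = (y == a).
Proof.
have /cards1P[a antipodes] : #|[set y | gdist e x y == d]| == 1 by rewrite antipodal.
by exists a => y; rewrite -in_set1 -antipodes inE.
Qed.

Lemma antipode_exists x : exists a, gdist e x a = d.
Proof.
by have [a antipode_a] := antipodeP x; exists a; apply/eqP; rewrite antipode_a.
Qed.

Lemma dist_profile_ord_max (R : nmodType) x a (f : T -> R) :
  gdist e x a = d -> dist_profile e d x f ord_max ord0 = f a.
Proof.
move=> gxa; have [a' antipode_a'] := antipodeP x.
have a'E : a' = a by apply/eqP; rewrite eq_sym -antipode_a' gxa.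
by rewrite mxE (big_pred1 a) // => y; rewrite antipode_a' a'E.
Qed.

Hypothesis d_gt0 : 0 < d.

Lemma card_vertices_gt0 : 0 < #|T|.
Proof. by apply: (@card_gt0_diameter T e); rewrite diam. Qed.

Lemma c_gt0 i : 0 < i <= d -> 0 < c i.
Proof.
case/andP=> i_gt0 id; have /card_gt0P[x _] := card_vertices_gt0.
have [a gxa] := antipode_exists x.
have [|z gxz] := gdist_attained conn sym (_ : i <= gdist e x a); first by rewrite gxa.
have [card_c _] := inter_numbers id gxz.
have [|w ezw gxw] := closer_neighbour conn sym (_ : gdist e x z = i.-1.+1).
  by rewrite gxz prednK.
by rewrite -card_c; apply/card_gt0P; exists w; rewrite inE ezw gxw eqxx.
Qed.

Lemma b0_gt0 : 0 < b 0.
Proof.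
have /card_gt0P[x _] := card_vertices_gt0; have [a gxa] := antipode_exists x.
have [|w eaw _] := closer_neighbour conn sym (_ : gdist e x a = d.-1.+1).
  by rewrite prednK.
by rewrite -(card_neighbours a); apply/card_gt0P; exists w; rewrite inE.
Qed.

Lemma shifted_inter_mx_superdiag (R : numDomainType) (s : R) (i j : 'I_d.+1) :
  j = i.+1 :> nat -> (s%:M + inter_mx R d b c)%R i j != 0%R.
Proof.
move=> jE; rewrite !mxE.
have neq_ij : (i == j) = false by apply/eqP => /(congr1 val) /=; lia.
have [-> ->] : (j == i :> nat) = false /\ (j == i.+1 :> nat) by split; apply/eqP; lia.
by rewrite neq_ij mulr0n add0r pnatr_eq0 -lt0n c_gt0 // jE /= -ltnS -jE.
Qed.

Local Open Scope ring_scope.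

Lemma injective_eigenfunction_ker_line (R : numFieldType) (s : R) (f : T -> R) :
  injective f -> (forall w, s * f w + \sum_(y | e w y) f y = 0) ->
  exists u : 'cV[R]_d.+1, u ord0 ord0 = 1 /\ u ord_max ord0 = -1 /\
    forall v, (s%:M + inter_mx R d b c) *m v = 0 <-> exists t, v = t *: u.
Proof.
move=> f_inj f_eigen; set M := s%:M + inter_mx R d b c.
have profile_ker x : M *m dist_profile e d x f = 0.
  apply/matrixP => j k; rewrite mulmxDl mul_scalar_mx mul_inter_mx_profile !mxE.
  by rewrite mulr_sumr -big_split big1 // => y _; exact: f_eigen.
have ker_line := hessenberg_ker_line (@shifted_inter_mx_hessenberg R d b c s)
  (shifted_inter_mx_superdiag s).
have neq_antipode x a : gdist e x a = d -> x != a.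
  by move=> gxa; apply: contraTneq d_gt0 => xa; rewrite -gxa -xa gdist_xx.
have [x [a [fx_neq0 gxa]]] : exists x a, f x != 0 /\ gdist e x a = d.
  have /card_gt0P[x0 _] := card_vertices_gt0; have [a0 gxa0] := antipode_exists x0.
  have [fx0|] := eqVneq (f x0) 0; last by exists x0, a0.
  exists a0, x0; split; last by rewrite gdist_sym.
  by rewrite -fx0 (inj_eq f_inj) eq_sym neq_antipode.
pose u := (f x)^-1 *: dist_profile e d x f.
have u00 : u ord0 ord0 = 1 by rewrite [u _ _]mxE (dist_profile_ord0 _ _ _ conn) mulVf.
have Mu0 : M *m u = 0 by rewrite -scalemxAr profile_ker scaler0.
exists u; split=> //; split; last exact: ker_line.
have [t profile_a] := (ker_line u Mu0 u00 _).1 (profile_ker a).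
have fa_t : f a = t.
  move/(congr1 (fun v : 'cV[R]_d.+1 => v ord0 ord0)): profile_a.
  by rewrite [RHS]mxE u00 mulr1 (dist_profile_ord0 _ _ _ conn).
have gax : gdist e a x = d by rewrite gdist_sym.
move/(congr1 (fun v : 'cV[R]_d.+1 => v ord_max ord0)): profile_a.
rewrite /= (dist_profile_ord_max _ gax) mxE [u _ _]mxE (dist_profile_ord_max _ gxa).
rewrite -fa_t => fx_eq.
have fa_opp : f a = - f x.
  have : f a ^+ 2 == f x ^+ 2 by apply/eqP; rewrite [f x ^+ 2]expr2 {1}fx_eq; field.
  by rewrite eqf_sqr (inj_eq f_inj) eq_sym (negbTE (neq_antipode _ _ gxa)) => /eqP.
by rewrite fa_opp mulrN mulVf.
Qed.

Lemma distance_magic_with_loops_ker_line (R : numFieldType) (s : nat) :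
  distance_magic_with_loops e s ->
  exists u : 'cV[R]_d.+1, u ord0 ord0 = 1 /\ u ord_max ord0 = -1 /\
    forall v, (s%:R%:M + inter_mx R d b c) *m v = 0 <-> exists t, v = t *: u.
Proof.
move=> /(magic_eigenfunction R (ltn_addr s b0_gt0))[f [f_inj f_eigen]].
exact: injective_eigenfunction_ker_line f_inj f_eigen.
Qed.

End Antipodal.

End DistanceRegular.

Unset Implicit Arguments.
Local Open Scope ring_scope.

Theorem lemma2p5 (R : realFieldType) (T : finType) (e : rel T) (d : nat)
    (b c : nat -> nat) :
  (0 < d)%N ->
  distance_regular e d b c ->
  antipodal_double_cover e d ->
  (distance_magic e ->
     exists u : 'cV[R]_d.+1,
       u ord0 ord0 = 1 /\ u ord_max ord0 = -1 /\
       forall v : 'cV[R]_d.+1,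
         inter_mx R d b c *m v = 0 <-> exists t : R, v = t *: u) /\
  (closed_distance_magic e ->
     exists u : 'cV[R]_d.+1,
       u ord0 ord0 = 1 /\ u ord_max ord0 = -1 /\
       forall v : 'cV[R]_d.+1,
         (1%:M + inter_mx R d b c) *m v = 0 <-> exists t : R, v = t *: u).
Proof.
move=> d_gt0 drg antipodal; split=> [magic|closed_magic].
  have [u [u0 [ud ker_u]]] := distance_magic_with_loops_ker_line drg antipodal d_gt0 R
    (distance_magic_with_loops0 magic).
  by exists u; do 2!split=> //; move=> v; rewrite -ker_u raddf0 add0r.
have [u [u0 [ud ker_u]]] := distance_magic_with_loops_ker_line drg antipodal d_gt0 R
  (closed_distance_magic_with_loops1 drg.1.2 closed_magic).
by exists u.
Qed.
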